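(* Let $\kappa=4$. For each of the rooted trees $((a,b),c)$, $((a,c),b)$, $((b,c),a)$, consider the polynomials of the corresponding form: for $((a,b),c)$ (indices ordered $a,b,c$) these are the entries of $$P_{+\cdot\cdot}\operatorname{Cof}(P_{\cdot+\cdot})^TP_{\cdot\cdot k}-P_{\cdot\cdot k}^T\operatorname{Cof}(P_{\cdot+\cdot})P_{+\cdot\cdot}^T,\qquad P_{\cdot\cdot k}\operatorname{Cof}(P_{+\cdot\cdot})P_{\cdot+\cdot}^T-P_{\cdot+\cdot}\operatorname{Cof}(P_{+\cdot\cdot})^TP_{\cdot\cdot k}^T,\quad k\in[4],$$ and for the other two trees the analogous polynomials obtained by permuting the roles of the taxa so that the cherry taxa play the roles of $a,b$ and the remaining taxon the role of $c$. Then all of these polynomials, for all three trees, vanish on every probability tensor $P$ arising from the CK Jukes–Cantor model on any of the three rooted trees with any edge lengths.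
   Context: For a 3-way tensor $P=(p_{ijk})$ with indices ordered $a,b,c$: $P_{+\cdot\cdot}$ has $(j,k)$-entry $\sum_ip_{ijk}$; $P_{\cdot+\cdot}$ has $(i,k)$-entry $\sum_jp_{ijk}$; $P_{\cdot\cdot k}$ has $(i,j)$-entry $p_{ijk}$; $^T$ is transpose; $\operatorname{Cof}(A)$ is the matrix of cofactors of $A$. CK Jukes–Cantor model on a rooted species tree with edge lengths (not necessarily ultrametric): with constant population size, a gene tree with one lineage per taxon is drawn under the multispecies coalescent, and a site evolves on it under the 4-state Jukes–Cantor process (equal off-diagonal rates, uniform stationary distribution) from the uniform root distribution, with a fixed scalar mutation rate; the site pattern distribution is the mixture over gene trees. *)

From HB Require Import structures.
From mathcomp Require Import all_boot all_order all_algebra.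
From mathcomp Require Import all_classical all_reals all_analysis.
Set Implicit Arguments. Unset Strict Implicit. Unset Printing Implicit Defensive.
Import Order.TTheory GRing.Theory Num.Theory.
Local Open Scope ring_scope.
Local Open Scope classical_set_scope.

(* A 3-way tensor with indices ordered (a,b,c), each in [4] = 'I_4. *)
Definition tensor3 (R : Type) := 'I_4 -> 'I_4 -> 'I_4 -> R.

Section Flattenings.
Variable R : comRingType.
Implicit Type P : tensor3 R.

Definition Pplus_a P : 'M[R]_4 := \matrix_(j, k) \sum_i P i j k.
Definition Pplus_b P : 'M[R]_4 := \matrix_(i, k) \sum_j P i j k.
Definition Pslice P (k : 'I_4) : 'M[R]_4 := \matrix_(i, j) P i j k.

Definition Cof n (A : 'M[R]_n) : 'M[R]_n := \matrix_(i, j) cofactor A i j.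

Definition inv1 P k : 'M[R]_4 :=
  Pplus_a P *m (Cof (Pplus_b P))^T *m Pslice P k
  - (Pslice P k)^T *m Cof (Pplus_b P) *m (Pplus_a P)^T.
Definition inv2 P k : 'M[R]_4 :=
  Pslice P k *m Cof (Pplus_a P) *m (Pplus_b P)^T
  - Pplus_b P *m (Cof (Pplus_a P))^T *m (Pslice P k)^T.

(* tree ((a,b),c): identity; ((a,c),b): roles (a,c,b); ((b,c),a): roles (b,c,a) *)
Definition reorder (s : 'I_3) P : tensor3 R :=
  match val s with
  | 0 => P
  | 1 => fun x y z => P x z y
  | _ => fun x y z => P z x y
  end.

Definition tree_invariants_vanish (s : 'I_3) P : Prop :=
  forall k : 'I_4, inv1 (reorder s P) k = 0 /\ inv2 (reorder s P) k = 0.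
End Flattenings.

Section CKJC.
Variable R : realType.

(* Jukes-Cantor transition matrix after time t with mutation rate mu
   (total substitution rate mu, each off-diagonal rate mu/3). *)
Definition JC (mu t : R) (x y : 'I_4) : R :=
  if x == y then 1/4 + 3/4 * expR (- (4/3) * mu * t)
  else 1/4 - 1/4 * expR (- (4/3) * mu * t).

(* site pattern probability (state i at x, j at y, k at z) for a rooted gene tree
   ((x,y),z): pendant branches dx, dy to the cherry node, internal branch e from
   the cherry node to the root, branch dz from root to z; uniform root. *)
Definition gene3 (mu dx dy e dz : R) (i j k : 'I_4) : R :=
  \sum_(r < 4) \sum_(q < 4)
     (1/4) * JC mu e r q * JC mu dx q i * JC mu dy q j * JC mu dz r k.

Local Notation leb := (@lebesgue_measure R).

(* CK Jukes-Cantor distribution for species tree ((x,y),z):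
   internal edge length T, pendant edge lengths tx, ty, tz (coalescent units,
   population size constant, one lineage per taxon), mutation rate mu. *)
Definition ck_cherry (mu T tx ty tz : R) (i j k : 'I_4) : R :=
  (* x,y coalesce in the internal population at time s above the cherry node *)
  Rintegral leb [set s | 0 <= s <= T] (fun s => expR (- s) *
    Rintegral leb [set u | 0 <= u] (fun u => expR (- u) *
      gene3 mu (tx + s) (ty + s) (T + u - s) (tz + u) i j k))
  (* no coalescence in the internal population: three lineages at the root *)
  + expR (- T) *
    Rintegral leb [set u | 0 <= u] (fun u => expR (- (3 * u)) *
      Rintegral leb [set w | 0 <= w] (fun w => expR (- w) *
        (gene3 mu (tx + T + u) (ty + T + u) w (tz + u + w) i j k
       + gene3 mu (tx + T + u) (tz + u) w (ty + T + u + w) i k j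
       + gene3 mu (ty + T + u) (tz + u) w (tx + T + u + w) j k i))).

(* site pattern distribution (indices ordered a,b,c) of the CK JC model on
   the species tree s: 0 = ((a,b),c), 1 = ((a,c),b), 2 = ((b,c),a),
   with internal edge length T and pendant edge lengths ta, tb, tc. *)
Definition ck_JC (s : 'I_3) (mu T ta tb tc : R) : tensor3 R :=
  match val s with
  | 0 => fun i j k => ck_cherry mu T ta tb tc i j k
  | 1 => fun i j k => ck_cherry mu T ta tc tb i k j
  | _ => fun i j k => ck_cherry mu T tb tc ta j k i
  end.
End CKJC.

From HB Require Import structures.
From mathcomp Require Import all_boot all_order all_algebra.
From mathcomp Require Import all_classical all_reals all_analysis.
From mathcomp Require Import ring.
Set Implicit Arguments. Unset Strict Implicit. Unset Printing Implicit Defensive.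
Import Order.TTheory GRing.Theory Num.Theory.
Local Open Scope ring_scope.

(* The Jukes-Cantor process is invariant under relabelling the four states,
   so every entry p_ijk of a CK Jukes-Cantor tensor depends only on the
   equality pattern ([i = j], [j = k], [i = k]) of the triple (i, j, k).  The
   proof has two independent halves.
   1. Algebra: for any tensor P of this "pattern-invariant" form, the
      flattenings P_{+..} and P_{.+.} have a constant diagonal and a constant
      off-diagonal; such matrices are closed under transposition, products and
      cofactors, and the two families of polynomials for ((a,b),c) reduce to a
      polynomial identity in the five pattern values, which holds.
   2. Model: each gene-tree distribution is a sum over the two internal states
      of products of Jukes-Cantor transition probabilities, hence is
      pattern-invariant; integrating over coalescence times and permuting the
      taxa preserves pattern invariance.
   Since re-indexing a pattern-invariant tensor for another tree keeps it
   pattern-invariant, the invariants of every tree vanish on every model. *)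

Ltac ord4 i := case: i => [[|[|[|[|?]]]] ?] //.

Definition pattern (i j k : 'I_4) : bool * bool * bool := (i == j, j == k, i == k).

(* A triple realising the equality pattern b (when b is realisable at all). *)
Definition pattern_rep (b : bool * bool * bool) : 'I_4 * 'I_4 * 'I_4 :=
  match b with
  | (true, true, _) => (0, 0, 0)
  | (true, false, _) => (0, 0, 1)
  | (false, true, _) => (1, 0, 0)
  | (false, false, true) => (0, 1, 0)
  | (false, false, false) => (0, 1, 2)
  end.

Lemma pattern_repK i j k :
  let r := pattern_rep (pattern i j k) in pattern r.1.1 r.1.2 r.2 = pattern i j k.
Proof. by ord4 i; ord4 j; ord4 k. Qed.

Lemma pattern_swap_eq i j k i' j' k' :
  pattern i j k = pattern i' j' k' -> pattern i k j = pattern i' k' j'.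
Proof. by case=> eij ejk eik; rewrite /pattern (eq_sym k) (eq_sym k') ejk eij eik. Qed.

Lemma pattern_cycle_eq i j k i' j' k' :
  pattern i j k = pattern i' j' k' -> pattern j k i = pattern j' k' i'.
Proof.
case=> eij ejk eik; rewrite /pattern (eq_sym k i) (eq_sym j i).
by rewrite (eq_sym k' i') (eq_sym j' i') ejk eik eij.
Qed.

Section PatternTensors.
Variable T : Type.
Implicit Type P : tensor3 T.

Definition pattern_invariant P : Prop := forall i j k i' j' k',
  pattern i j k = pattern i' j' k' -> P i j k = P i' j' k'.

Definition pattern_tensor (F : bool * bool * bool -> T) : tensor3 T :=
  fun i j k => F (pattern i j k).

Lemma pattern_invariant_rep P :
  (forall i j k, let r := pattern_rep (pattern i j k) in P i j k = P r.1.1 r.1.2 r.2) ->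
  pattern_invariant P.
Proof. by move=> hP i j k i' j' k' e; rewrite hP [RHS]hP e. Qed.

Lemma pattern_invariantE P : pattern_invariant P ->
  P = pattern_tensor (fun b => let r := pattern_rep b in P r.1.1 r.1.2 r.2).
Proof.
move=> hP; apply/funext => i; apply/funext => j; apply/funext => k.
by apply: hP; rewrite pattern_repK.
Qed.

Lemma pattern_invariant_swap P :
  pattern_invariant P -> pattern_invariant (fun i j k => P i k j).
Proof. by move=> hP i j k i' j' k' /pattern_swap_eq; apply: hP. Qed.

Lemma pattern_invariant_cycle P :
  pattern_invariant P -> pattern_invariant (fun i j k => P j k i).
Proof. by move=> hP i j k i' j' k' /pattern_cycle_eq; apply: hP. Qed.

End PatternTensors.

Lemma reorder_pattern_invariant (R : comRingType) (s : 'I_3) (P : tensor3 R) :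
  pattern_invariant P -> pattern_invariant (reorder s P).
Proof.
rewrite /reorder; case: s => [[|[|[|//]]] _] /= hP //.
- exact: pattern_invariant_swap.
- by do 2!apply: pattern_invariant_cycle.
Qed.
Section ConstantDiagonalMatrices.
Variable R : comRingType.

(* The matrix with every diagonal entry equal to d and every off-diagonal entry
   equal to o; the flattenings of a pattern-invariant tensor have this shape. *)
Definition dmx n (d o : R) : 'M[R]_n := \matrix_(i, j) if i == j then d else o.

Lemma dmx_tr n (d o : R) : (dmx n d o)^T = dmx n d o.
Proof. by apply/matrixP => i j; rewrite !mxE eq_sym. Qed.

Lemma dmx_mul (a b c e : R) :
  dmx 4 a b *m dmx 4 c e = dmx 4 (a * c + 3 * b * e) (a * e + b * c + 2 * b * e).
Proof.
apply/matrixP => i j; rewrite !mxE !big_ord_recl big_ord0 !mxE.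
by ord4 i; ord4 j; rewrite /=; ring.
Qed.

Lemma minor_mxf n (f : nat -> nat -> R) (i j : 'I_n.+1) :
  row' i (col' j (\matrix_(a < n.+1, b < n.+1) f a b)) =
  \matrix_(a < n, b < n) f (bump i a) (bump j b).
Proof. by apply/matrixP => a b; rewrite !mxE. Qed.

Lemma det2_mxf (f : nat -> nat -> R) :
  \det (\matrix_(i < 2, j < 2) f i j) = f 0 0 * f 1 1 - f 0 1 * f 1 0.
Proof.
rewrite (expand_det_row _ 0) !big_ord_recl big_ord0 /cofactor !minor_mxf.
by rewrite !det_mx11 !mxE /= /bump /=; ring.
Qed.

Lemma det3_mxf (f : nat -> nat -> R) :
  \det (\matrix_(i < 3, j < 3) f i j) =
  f 0 0 * (f 1 1 * f 2 2 - f 1 2 * f 2 1)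
  - f 0 1 * (f 1 0 * f 2 2 - f 1 2 * f 2 0)
  + f 0 2 * (f 1 0 * f 2 1 - f 1 1 * f 2 0).
Proof.
rewrite (expand_det_row _ 0) !big_ord_recl big_ord0 /cofactor !minor_mxf.
by rewrite !(det2_mxf (fun a b => f (bump _ a) (bump _ b))) !mxE /= /bump /=; ring.
Qed.

Lemma dmx_cof (d o : R) :
  Cof (dmx 4 d o) = dmx 4 ((d - o) ^+ 2 * (d + 2 * o)) (- (d - o) ^+ 2 * o).
Proof.
apply/matrixP => i j; rewrite !mxE /cofactor.
rewrite (minor_mxf (fun a b => if a == b then d else o)).
rewrite (det3_mxf (fun a b => if bump i a == bump j b then d else o)).
by ord4 i; ord4 j; rewrite /= /bump /=; ring.
Qed.

End ConstantDiagonalMatrices.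

Section PatternTensorInvariants.
Variables (R : comRingType) (F : bool * bool * bool -> R).

Let P := pattern_tensor F.

Lemma Pplus_a_pattern : Pplus_a P =
  dmx 4 (F (true, true, true) + 3 * F (false, true, false))
        (F (true, false, false) + F (false, false, true) + 2 * F (false, false, false)).
Proof.
apply/matrixP => i j; rewrite !mxE !big_ord_recl big_ord0 /P /pattern_tensor /pattern.
by ord4 i; ord4 j; rewrite /=; ring.
Qed.

Lemma Pplus_b_pattern : Pplus_b P =
  dmx 4 (F (true, true, true) + 3 * F (false, false, true))
        (F (true, false, false) + F (false, true, false) + 2 * F (false, false, false)).
Proof.
apply/matrixP => i j; rewrite !mxE !big_ord_recl big_ord0 /P /pattern_tensor /pattern.
by ord4 i; ord4 j; rewrite /=; ring.
Qed.

(* Both families of polynomials for ((a,b),c) vanish on pattern tensors: after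
   collapsing the products of constant-diagonal matrices, each entry is a
   polynomial identity in the five pattern values of the slice. *)
Lemma inv1_pattern k : inv1 P k = 0.
Proof.
rewrite /inv1 Pplus_a_pattern Pplus_b_pattern dmx_cof !dmx_tr.
rewrite -[_ *m _ *m dmx _ _ _]mulmxA !dmx_mul.
apply/matrixP => i j; rewrite !mxE !big_ord_recl !big_ord0 !mxE /P /pattern_tensor /pattern.
by ord4 k; ord4 i; ord4 j; rewrite /=; ring.
Qed.

Lemma inv2_pattern k : inv2 P k = 0.
Proof.
rewrite /inv2 Pplus_a_pattern Pplus_b_pattern dmx_cof !dmx_tr.
rewrite -[Pslice P k *m _ *m _]mulmxA !dmx_mul.
apply/matrixP => i j; rewrite !mxE !big_ord_recl !big_ord0 !mxE /P /pattern_tensor /pattern.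
by ord4 k; ord4 i; ord4 j; rewrite /=; ring.
Qed.

End PatternTensorInvariants.

Section StarTensors.
Variable R : comRingType.

Definition eqfun (a b : R) (x y : 'I_4) : R := if x == y then a else b.

(* Leaf distribution on a rooted three-leaf tree ((x,y),z): the root state r is
   weighted by w, f is the transition to the cherry node q, g and h lead from q
   to the leaves x and y, and m leads from r to the leaf z. *)
Definition star_tensor (w : R) (f g h m : 'I_4 -> 'I_4 -> R) : tensor3 R :=
  fun i j k => \sum_(r < 4) \sum_(q < 4) w * f r q * g q i * h q j * m r k.

Lemma star_tensor_pattern_invariant w af bf ag bg ah bh am bm :
  pattern_invariant
    (star_tensor w (eqfun af bf) (eqfun ag bg) (eqfun ah bh) (eqfun am bm)).
Proof.
apply: pattern_invariant_rep => i j k /=.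
rewrite /star_tensor !big_ord_recl !big_ord0 /eqfun.
by ord4 i; ord4 j; ord4 k; rewrite /=; ring.
Qed.

End StarTensors.

Section CKJukesCantor.
Variable R : realType.

(* gene3 is a star tensor of Jukes-Cantor matrices, which are of eqfun form. *)
Lemma gene3_pattern_invariant (mu dx dy e dz : R) :
  pattern_invariant (gene3 mu dx dy e dz).
Proof. exact: star_tensor_pattern_invariant. Qed.

(* The same fact as an equation between functions, usable under integrals. *)
Lemma gene3_patternE : @gene3 R = fun mu dx dy e dz =>
  pattern_tensor (fun b => let r := pattern_rep b in gene3 mu dx dy e dz r.1.1 r.1.2 r.2).
Proof. by do 5!apply/funext => ?; exact/pattern_invariantE/gene3_pattern_invariant. Qed.

(* Mixing gene trees, with their leaves listed in any order, preserves pattern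
   invariance: the entries only involve the patterns of (i,j,k), (i,k,j), (j,k,i). *)
Lemma ck_cherry_pattern_invariant (mu T tx ty tz : R) :
  pattern_invariant (ck_cherry mu T tx ty tz).
Proof.
move=> i j k i' j' k' e; rewrite /ck_cherry gene3_patternE /pattern_tensor.
by rewrite e (pattern_swap_eq e) (pattern_cycle_eq e).
Qed.

Lemma ck_JC_pattern_invariant (s : 'I_3) (mu T ta tb tc : R) :
  pattern_invariant (ck_JC s mu T ta tb tc).
Proof.
rewrite /ck_JC; case: (val s) => [|[|_]].
- exact: ck_cherry_pattern_invariant.
- exact/pattern_invariant_swap/ck_cherry_pattern_invariant.
- exact/pattern_invariant_cycle/ck_cherry_pattern_invariant.
Qed.

End CKJukesCantor.

Theorem corollaryA2 (R : realType) (mu T ta tb tc : R)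
  (hmu : 0 < mu) (hT : 0 < T) (hta : 0 < ta) (htb : 0 < tb) (htc : 0 < tc)
  (s s' : 'I_3) :
  tree_invariants_vanish s' (ck_JC s mu T ta tb tc).
Proof.
have hP := reorder_pattern_invariant s' (ck_JC_pattern_invariant s mu T ta tb tc).
move=> k; rewrite (pattern_invariantE hP).
by split; [exact: inv1_pattern | exact: inv2_pattern].
Qed.
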